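(* Let $(\Omega,\mathcal{A},\mu)$ be a finite measure space and let $(f_n)_{n\in\mathbb{N}_0}$ be a sequence of non-negative functions in $L^1(\Omega,\mathcal{A},\mu)$ for which there exists $g\in L^1(\Omega,\mathcal{A},\mu)$ with $f_n\le g$ a.e. for all $n\in\mathbb{N}_0$. Then $\frac{1}{n}\sum_{j=0}^{n-1}f_j\to 0$ as $n\to\infty$ if and only if there is a sequence of measurable sets $(A_n)_{n\in\mathbb{N}_0}$ in $\mathcal{A}$ with $\frac{1}{n}\sum_{j=0}^{n-1}\chi_{A_j}\to 0$ and $\chi_{\Omega\setminus A_n}f_n\to 0$ as $n\to\infty$. Here all the limits may be taken either a.e. pointwise or in $L^1$ norm.
   Context: $\chi_A$ denotes the characteristic (indicator) function of a set $A$. *)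

From HB Require Import structures.
From mathcomp Require Import all_boot all_order all_algebra.
From mathcomp Require Import all_classical all_reals all_analysis.
Set Implicit Arguments. Unset Strict Implicit. Unset Printing Implicit Defensive.
Import Order.TTheory GRing.Theory Num.Theory.
Import numFieldNormedType.Exports.
Local Open Scope classical_set_scope.
Local Open Scope ring_scope.

Definition avg (T : Type) (R : realType) (u : nat -> T -> R) (n : nat) (x : T) : R :=
  (n%:R)^-1 * \sum_(j < n) u j x.

Definition cvg0_ae (d : measure_display) (T : measurableType d) (R : realType)
  (mu : {measure set T -> \bar R}) (h : nat -> T -> R) : Prop :=
  {ae mu, forall x, (fun n => h n x) @ \oo --> (0 : R)}.

Definition cvg0_L1 (d : measure_display) (T : measurableType d) (R : realType)
  (mu : {measure set T -> \bar R}) (h : nat -> T -> R) : Prop :=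
  ((fun n => \int[mu]_x (`|h n x|)%:E) @ \oo --> 0)%E.

(* If the Cesaro means b_n of f tend to 0 (pointwise, or in L^1 norm), take a
   positive nonincreasing majorant e_n of b_n tending to 0 and
   A_n := {f_n > sqrt e_n}.  Off A_n we have f_n <= sqrt e_n -> 0, and on A_j,
   j < n, the indicator is at most f_j / sqrt e_j <= f_j / sqrt e_n, so the
   Cesaro means of the indicators are at most b_n / sqrt e_n <= sqrt b_n.
   Conversely, f_j = 1_{A_j} f_j + 1_{~A_j} f_j: the means of the second part
   vanish by Cesaro, and 1_{A_j} f_j <= M 1_{A_j} + (g - M)^+ for every level M;
   pointwise take M = g, in L^1 choose M so that the integral of (g - M)^+,
   which tends to 0 by dominated convergence, is small. *)

From HB Require Import structures.
From mathcomp Require Import all_boot all_order all_algebra.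
From mathcomp Require Import all_classical all_reals all_analysis.
From mathcomp Require Import measurable_realfun lra.
Set Implicit Arguments. Unset Strict Implicit. Unset Printing Implicit Defensive.
Import Order.TTheory GRing.Theory Num.Theory.
Import numFieldNormedType.Exports.
Local Open Scope classical_set_scope.
Local Open Scope ring_scope.

Section mean.
Variable R : realType.
Implicit Types (u v a b c e : R^nat).

Definition mean u n : R := n%:R^-1 * \sum_(j < n) u j.

Lemma mean_ge0 u n : (forall j, 0 <= u j) -> 0 <= mean u n.
Proof. by move=> u0; rewrite mulr_ge0 ?sumr_ge0. Qed.

Lemma ler_mean u v n : (forall j, (j < n)%N -> u j <= v j) -> mean u n <= mean v n.
Proof. by move=> uv; rewrite ler_wpM2l// ler_sum// => j _; exact: uv. Qed.

Lemma meanD u v n : mean (fun j => u j + v j) n = mean u n + mean v n.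
Proof. by rewrite /mean big_split mulrDr. Qed.

Lemma meanZ k u n : mean (fun j => k * u j) n = k * mean u n.
Proof. by rewrite /mean -mulr_sumr mulrCA. Qed.

Lemma mean_cst_le k n : 0 <= k -> mean (fun=> k) n <= k.
Proof.
move=> k0; rewrite /mean sumr_const card_ord.
by case: n => [|n]; rewrite ?invr0 ?mul0r// -[k *+ _]mulr_natl mulKf ?pnatr_eq0.
Qed.

Lemma mean_cvg0 u : u @ \oo --> 0 -> mean u @ \oo --> 0.
Proof.
move=> /cesaro u_mean; rewrite -cvg_shiftS; apply: cvg_trans u_mean.
apply: near_eq_cvg; apply: nearW => n.
by rewrite /mean /arithmetic_mean /series /= big_mkord.
Qed.

Lemma mean_le_split a c c' G M n : (forall j, 0 <= a j <= G) ->
  (forall j, 0 <= c j <= 1) -> (forall j, c' j = 1 - c j) -> 0 <= M ->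
  mean a n <= mean (fun j => c' j * a j) n + M * mean c n + Num.max (G - M) 0.
Proof.
move=> aG c01 c'E M0; set m := Num.max (G - M) 0.
have m0 : 0 <= m by rewrite le_max lexx orbT.
have Gm : G - M <= m by rewrite le_max lexx.
apply: (@le_trans _ _ (mean (fun j => c' j * a j + (M * c j + m)) n)).
  apply: ler_mean => j _; rewrite c'E.
  (* c a <= c G = M c + c (G - M) <= M c + m *)
  by have /andP[? ?] := aG j; have /andP[? ?] := c01 j; nra.
by rewrite meanD meanD meanZ addrA lerD2l mean_cst_le.
Qed.

Lemma mean_cvg0_of_split a c c' G : (forall j, 0 <= a j <= G) ->
    (forall j, 0 <= c j <= 1) -> (forall j, c' j = 1 - c j) ->
    mean c @ \oo --> 0 -> (fun n => c' n * a n) @ \oo --> 0 ->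
  mean a @ \oo --> 0.
Proof.
move=> aG c01 c'E c_cvg0 c'a_cvg0.
have G0 : 0 <= G by case/andP: (aG 0%N) => /le_trans; apply.
apply: (@squeeze_cvgr _ _ _ _ (fun=> 0)
  (fun n => mean (fun j => c' j * a j) n + G * mean c n)); last 2 first.
- exact: cvg_cst.
- rewrite -[0]addr0 -[X in _ + X](mulr0 G).
  by apply: cvgD; [exact: mean_cvg0 | exact: cvgMr].
apply: nearW => n; rewrite mean_ge0 => [/=|j]; last by case/andP: (aG j).
by have := mean_le_split n aG c01 c'E G0; rewrite subrr maxxx addr0.
Qed.

(* The truncation at 1 keeps the suprema finite, the 1/(n+1) keeps e positive. *)
Definition majorant b n : R := sups (fun m => Num.min (b m) 1) n + n.+1%:R^-1.

Lemma has_ubound_min1 b : has_ubound (range (fun m => Num.min (b m) 1)).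
Proof. by exists 1 => _ [m _ <-]; rewrite ge_min lexx orbT. Qed.

Lemma min1_le_sups b n : Num.min (b n) 1 <= sups (fun m => Num.min (b m) 1) n.
Proof.
by apply: ub_le_sup; [exact/has_ubound_sdrop/has_ubound_min1 | exists n => /=].
Qed.

Lemma majorant_gt0 b n : (forall j, 0 <= b j) -> 0 < majorant b n.
Proof.
move=> b0; rewrite ltr_pwDr ?invr_gt0 ?ltr0n//.
by apply: le_trans (min1_le_sups b n); rewrite le_min b0 ler01.
Qed.

Lemma nonincreasing_majorant b : {homo majorant b : m n / (m <= n)%N >-> n <= m}.
Proof.
move=> m n mn; rewrite lerD ?(nonincreasing_sups (has_ubound_min1 b))//.
by rewrite lef_pV2 ?posrE ?ltr0n// ler_nat.
Qed.

Lemma majorant_ge b n : b n <= 1 -> b n <= majorant b n.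
Proof.
move=> b1; rewrite -[b n]addr0 lerD ?invr_ge0//.
by apply: le_trans (min1_le_sups b n); rewrite le_min b1 lexx.
Qed.

Lemma majorant_cvg0 b : b @ \oo --> 0 -> majorant b @ \oo --> 0.
Proof.
move=> b_cvg0; rewrite -[0]addr0; apply: cvgD; last exact: cvg_harmonic.
apply: cvg_sups; apply: cvg_trans (b_cvg0); apply: near_eq_cvg.
by near=> m; apply/esym/min_idPl/ltW; near: m; exact: (cvgr_lt 0 b_cvg0 1 ltr01).
Unshelve. all: by end_near. Qed.

Lemma sqrtr_cvg0 u : u @ \oo --> 0 -> (fun n => Num.sqrt (u n)) @ \oo --> 0.
Proof.
by move=> u_cvg0; rewrite -sqrtr0; apply: continuous_cvg; first exact: sqrt_continuous.
Qed.

Lemma lt_sqr_le_div_sqrt (y t : R) : 0 <= y -> 0 < t ->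
  ((t < y ^+ 2)%R%:R : R) <= y / Num.sqrt t.
Proof.
move=> y0 t0; case: ltP => [ty|_]; last by rewrite divr_ge0.
rewrite ler_pdivlMr ?sqrtr_gt0// mul1r ltW//.
by rewrite -(ger0_norm y0) -sqrtr_sqr ltr_sqrt// (lt_trans t0 ty).
Qed.

Lemma ge_sqr_mul_le_sqrt (y t : R) : 0 <= y -> 0 <= t ->
  (1 - (t < y ^+ 2)%R%:R) * y <= Num.sqrt t.
Proof.
move=> y0 t0; case: ltP => [_|yt]; first by rewrite subrr mul0r sqrtr_ge0.
by rewrite subr0 mul1r -(ger0_norm y0) -sqrtr_sqr ler_sqrt.
Qed.

Lemma mean_lt_sqr_le a c e n : (forall j, 0 <= a j) -> (forall j, 0 < e j) ->
    {homo e : i j / (i <= j)%N >-> j <= i} ->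
    (forall j, c j = (e j < a j ^+ 2)%R%:R) ->
  mean c n <= mean a n / Num.sqrt (e n).
Proof.
move=> a0 e0 e_noninc cE; rewrite mulrC -meanZ; apply: ler_mean => j jn.
rewrite cE mulrC (le_trans (lt_sqr_le_div_sqrt (a0 j) (e0 j)))// ler_wpM2l//.
by rewrite lef_pV2 ?posrE ?sqrtr_gt0// ler_sqrt ?e_noninc 1?ltW// ltnW.
Qed.

Lemma div_sqrt_majorant_le b n : (forall j, 0 <= b j) -> b n <= 1 ->
  b n / Num.sqrt (majorant b n) <= Num.sqrt (b n).
Proof.
move=> b0 b1; have e0 := majorant_gt0 n b0.
rewrite ler_pdivrMr ?sqrtr_gt0// -{1}(sqr_sqrtr (b0 n)) expr2.
by rewrite ler_wpM2l ?sqrtr_ge0// ler_sqrt ?majorant_ge// ltW.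
Qed.

Lemma mean_cvg0_split a c c' : (forall j, 0 <= a j) -> mean a @ \oo --> 0 ->
    (forall j, c j = (majorant (mean a) j < a j ^+ 2)%R%:R) ->
    (forall j, c' j = 1 - c j) ->
  mean c @ \oo --> 0 /\ (fun n => c' n * a n) @ \oo --> 0.
Proof.
move=> a0 mean_cvg0 cE c'E; set e := majorant (mean a).
have b0 j : 0 <= mean a j by exact: mean_ge0.
have e0 j : 0 < e j by exact: majorant_gt0.
split.
  apply: (squeeze_cvgr _ (cvg_cst 0) (sqrtr_cvg0 mean_cvg0)).
  near=> n; rewrite mean_ge0 => [/=|j]; last by rewrite cE.
  apply: le_trans (mean_lt_sqr_le n a0 e0 (@nonincreasing_majorant _) cE) _.
  apply: div_sqrt_majorant_le => //; apply: ltW; near: n.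
  exact: (cvgr_lt 0 mean_cvg0 1 ltr01).
apply: (squeeze_cvgr _ (cvg_cst 0) (sqrtr_cvg0 (majorant_cvg0 mean_cvg0))).
apply: nearW => n; rewrite c'E cE ge_sqr_mul_le_sqrt ?andbT ?(ltW (e0 n))//.
by rewrite mulr_ge0// subr_ge0; case: ltP.
Unshelve. all: by end_near. Qed.

End mean.

Lemma ge0_cvge0P (R : realType) (u : nat -> \bar R) : (forall n, 0 <= u n)%E ->
  u @ \oo --> 0%E <-> forall e : R, 0 < e -> \forall n \near \oo, (u n <= e%:E)%E.
Proof.
move=> u0; split=> [u_cvg0 e e0|u_le].
  have e_nbhs : ereal_nbhs 0%E (fun y => y < e%:E)%E.
    by apply: open_ereal_lt'; rewrite lte_fin.
  by near=> n; apply/ltW; near: n; exact: u_cvg0 _ e_nbhs.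
have u_fin : \forall n \near \oo, u n \is a fin_num.
  apply: filterS _ (u_le 1 ltr01) => n un1.
  by rewrite ge0_fin_numE// (le_lt_trans un1) ?ltry.
apply/fine_cvgP; split=> //; apply/cvgrPdist_le => e e0.
apply: filterS2 _ _ u_fin (u_le e e0) => n un_fin une /=.
by rewrite sub0r normrN ger0_norm ?fine_ge0// -lee_fin fineK.
Unshelve. all: by end_near. Qed.

Lemma indic_ge0_le1 {R : realType} {T : Type} (A : set T) x : 0 <= (\1_A x : R) <= 1.
Proof. by rewrite indicE; case: (x \in A); rewrite ?lexx ?ler01. Qed.

Lemma indicCE {R : realType} {T : Type} (A : set T) x : \1_(~` A) x = 1 - \1_A x :> R.
Proof. by rewrite indicC indicE; case: (x \in A); rewrite ?subrr ?subr0. Qed.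

Section measurable_avg.
Context d (T : measurableType d) (R : realType).
Implicit Types u : nat -> T -> R.

Lemma measurable_ltr_set (F G : T -> R) : measurable_fun setT F ->
  measurable_fun setT G -> measurable [set x | F x < G x].
Proof.
move=> mF mG; have mtrue : measurable [set true] by [].
by have := measurable_fun_ltr mF mG measurableT mtrue; rewrite setTI.
Qed.

Lemma avg_ge0 u n x : (forall j, 0 <= u j x) -> 0 <= avg u n x.
Proof. exact: mean_ge0. Qed.

Lemma measurable_avg u n : (forall j, measurable_fun setT (u j)) ->
  measurable_fun setT (avg u n).
Proof. by move=> mu_; apply: measurable_funM => //; exact: measurable_sum. Qed.

Lemma measurable_majorant u n : (forall j, measurable_fun setT (u j)) ->
  measurable_fun setT (fun x => majorant (u ^~ x) n).
Proof.
move=> mu_; apply: measurable_funD => //.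
apply: (@measurable_fun_sups _ _ _ _ (fun m x => Num.min (u m x) 1)) => [x _|m].
  exact: has_ubound_min1.
exact: measurable_minr.
Qed.

End measurable_avg.

Section integral_avg.
Context d (T : measurableType d) (R : realType) (mu : {measure set T -> \bar R}).

Lemma ge0_integral_avg (h : nat -> T -> R) n :
    (forall j, measurable_fun setT (h j)) -> (forall j x, 0 <= h j x) ->
    (forall j, (\int[mu]_x (h j x)%:E)%E \is a fin_num) ->
  (\int[mu]_x (avg h n x)%:E = (mean (fun j => fine (\int[mu]_x (h j x)%:E)) n)%:E)%E.
Proof.
move=> mh h0 h_fin; under eq_integral do rewrite /avg /mean EFinM -sumEFin.
rewrite ge0_integralZl_EFin//; last 2 first.
- by move=> x _; apply: sume_ge0 => j _; rewrite lee_fin.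
- by apply: emeasurable_sum => j; exact/measurable_EFinP.
rewrite ge0_integral_sum//; last 2 first.
- by move=> j; exact/measurable_EFinP.
- by move=> j x _; rewrite lee_fin.
rewrite /mean EFinM -sumEFin; congr (_ * _)%E; apply: eq_bigr => j _.
by rewrite fineK.
Qed.

Lemma cvg0_integral_max_subn (g : T -> R) :
  mu.-integrable setT (fun x => (g x)%:E) ->
  (fun M : nat => \int[mu]_x (Num.max (g x - M%:R) 0)%:E)%E @ \oo --> 0%E.
Proof.
move=> g_int; have mg : measurable_fun setT g.
  exact/measurable_EFinP/(measurable_int mu g_int).
have mtail (M : nat) : measurable_fun setT (fun x => (Num.max (g x - M%:R) 0)%:E).
  by apply/measurable_EFinP; apply: measurable_maxr => //; exact: measurable_funB.
have tail_cvg0 : {ae mu, forall x, setT x ->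
    (fun M : nat => (Num.max (g x - M%:R) 0)%:E) @ \oo --> (0 : \bar R)}.
  apply: aeW => x _; apply: cvg_near_cst; near=> M.
  have gM : g x < M%:R by near: M; exact: nbhs_infty_gtr.
  by congr (_%:E); apply/max_idPr; rewrite subr_le0 ltW.
have tail_le : {ae mu, forall x (M : nat), setT x ->
    (`|(Num.max (g x - M%:R) 0)%:E| <= (`|g x|)%:E)%E}.
  apply: aeW => x M _; rewrite abse_EFin lee_fin ger0_norm ?le_max ?lexx ?orbT//.
  by rewrite ge_max normr_ge0 andbT (le_trans _ (ler_norm _))// lerBlDr lerDl.
have [_ _] := dominated_convergence measurableT mtail (measurable_cst (0 : \bar R))
  tail_cvg0 (integrable_abse g_int) tail_le.
by rewrite integral_cst// mul0e.
Unshelve. all: by end_near. Qed.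

Lemma cvg0_L1_le (h : nat -> T -> R) (v : R^nat) : v @ \oo --> 0 ->
    (\forall n \near \oo, \int[mu]_x (`|h n x|)%:E <= (v n)%:E)%E ->
  cvg0_L1 mu h.
Proof.
move=> v_cvg0 hv; apply: (@squeeze_cvge _ _ _ _ (fun=> 0%E) _ (fun n => (v n)%:E)).
- by apply: filterS _ hv => n ->; rewrite integral_ge0// => x _; rewrite lee_fin.
- exact: cvg_cst.
- by apply: cvg_EFin; [exact: nearW | exact: v_cvg0].
Qed.

End integral_avg.

Section cesaro_cvg0_off_density0.
Context d (T : measurableType d) (R : realType) (mu : {finite_measure set T -> \bar R}).
Variables (f : nat -> T -> R) (g : T -> R).
Hypothesis f_int : forall n, mu.-integrable setT (fun x => (f n x)%:E).
Hypothesis f_ge0 : forall n, {ae mu, forall x, 0 <= f n x}.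
Hypothesis g_int : mu.-integrable setT (fun x => (g x)%:E).
Hypothesis f_le_g : forall n, {ae mu, forall x, f n x <= g x}.

Definition cvg0_off_density0 (cvg0 : (nat -> T -> R) -> Prop) :=
  exists A : nat -> set T, (forall n, measurable (A n)) /\
    cvg0 (avg (fun n => \1_(A n))) /\ cvg0 (fun n x => \1_(~` A n) x * f n x).

Definition peak_set (e : nat -> T -> R) n := [set x | e n x < f n x ^+ 2].

Lemma indic_peak_set e n x : \1_(peak_set e n) x = (e n x < f n x ^+ 2)%R%:R :> R.
Proof. by rewrite indicE mem_setE. Qed.

Lemma measurable_f n : measurable_fun setT (f n).
Proof. exact/measurable_EFinP/(measurable_int mu (f_int n)). Qed.

Lemma measurable_abs_indic_mul_f (A : set T) n : measurable A ->
  measurable_fun setT (fun x => `|\1_A x * f n x|).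
Proof.
move=> mA; apply: measurableT_comp => //.
by apply: measurable_funM; [exact: measurable_indic | exact: measurable_f].
Qed.

Lemma measurable_peak_set e n : measurable_fun setT (e n) ->
  measurable (peak_set e n).
Proof.
by move=> me; apply: measurable_ltr_set => //; exact: measurable_funX (measurable_f n).
Qed.

Lemma ae_f_bounded : {ae mu, forall x n, 0 <= f n x <= g x}.
Proof.
apply: filterS2 _ _ (ae_foralln f_ge0) (ae_foralln f_le_g) => x f0 fg n.
by rewrite f0 fg.
Qed.

Lemma integral_abs_indic_mul_fin_num (A : set T) n : measurable A ->
  (\int[mu]_x (`|\1_A x * f n x|)%:E)%E \is a fin_num.
Proof.
move=> mA; rewrite ge0_fin_numE; last by apply: integral_ge0 => x _; rewrite lee_fin.
have /integrableP[_ f_fin] := f_int n; apply: le_lt_trans f_fin.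
apply: ge0_le_integral => //.
- exact/measurable_EFinP/measurable_abs_indic_mul_f.
- exact: measurableT_comp (measurable_int mu (f_int n)).
- move=> x _; have /andP[A0 A1] := indic_ge0_le1 (R := R) A x.
  by rewrite abse_EFin lee_fin normrM ler_piMl// ger0_norm.
Qed.

Lemma ae_split_of_cvg0 : cvg0_ae mu (avg f) -> cvg0_off_density0 (cvg0_ae mu).
Proof.
move=> avg_cvg0; pose e n x := majorant (fun m => avg f m x) n.
exists (peak_set e); split.
  move=> n; apply: measurable_peak_set.
  by apply: measurable_majorant => m; apply: measurable_avg; exact: measurable_f.
have split_ae : {ae mu, forall x,
    (fun n => avg (fun n => \1_(peak_set e n) : T -> R) n x) @ \oo --> 0 /\
    (fun n => \1_(~` peak_set e n) x * f n x) @ \oo --> 0}.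
  apply: filterS2 _ _ ae_f_bounded avg_cvg0 => x fx avg_x_cvg0.
  apply: (@mean_cvg0_split _ (fun j => f j x) (fun j => \1_(peak_set e j) x)
    (fun j => \1_(~` peak_set e j) x) _ avg_x_cvg0) => j.
  - by case/andP: (fx j).
  - exact: indic_peak_set.
  - exact: indicCE.
by split; apply: filterS _ split_ae => x [].
Qed.

Lemma ae_cvg0_of_split : cvg0_off_density0 (cvg0_ae mu) -> cvg0_ae mu (avg f).
Proof.
move=> [A [_ [A_cvg0 off_cvg0]]].
apply: filterS3 _ _ ae_f_bounded A_cvg0 off_cvg0 => x fx Ax_cvg0 offx_cvg0.
apply: (@mean_cvg0_of_split _ (fun j => f j x) (fun j => \1_(A j) x)
  (fun j => \1_(~` A j) x) (g x)) => // j.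
- exact: indic_ge0_le1.
- exact: indicCE.
Qed.

Lemma L1_split_of_cvg0 : cvg0_L1 mu (avg f) -> cvg0_off_density0 (cvg0_L1 mu).
Proof.
move=> avg_cvg0; pose b n := fine (\int[mu]_x (`|avg f n x|)%:E)%E.
have b0 n : 0 <= b n by apply/fine_ge0/integral_ge0 => x _; rewrite lee_fin.
have b_cvg0 : b @ \oo --> 0 by exact: fine_cvg avg_cvg0.
have e0 n : 0 < majorant b n by exact: majorant_gt0.
pose A := peak_set (fun n _ => majorant b n).
have mA n : measurable (A n) by exact/measurable_peak_set/measurable_cst.
exists A; split=> //; split.
- apply: (cvg0_L1_le (sqrtr_cvg0 b_cvg0)); near=> n.
  apply: (@le_trans _ _ (\int[mu]_x (`|avg f n x| / Num.sqrt (majorant b n))%:E)%E).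
    apply: ae_ge0_le_integral => //.
    + apply/measurable_EFinP/measurableT_comp => //.
      by apply: measurable_avg => j; exact: measurable_indic.
    + apply/measurable_EFinP/measurable_funM => //.
      by apply: measurableT_comp => //; apply: measurable_avg; exact: measurable_f.
    + apply: filterS _ ae_f_bounded => x fx _; rewrite lee_fin.
      have f0 j : 0 <= f j x by case/andP: (fx j).
      rewrite ger0_norm; last first.
        by apply: avg_ge0 => j; case/andP: (indic_ge0_le1 (R := R) (A j) x).
      apply: le_trans (mean_lt_sqr_le n f0 e0 (@nonincreasing_majorant _ b)
        (fun j => indic_peak_set _ j x)) _.
      by rewrite ler_wpM2r ?invr_ge0 ?sqrtr_ge0// ler_norm.
  under eq_integral do rewrite EFinM.
  rewrite ge0_integralZr//; last first.
    apply/measurable_EFinP/measurableT_comp => //.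
    by apply: measurable_avg; exact: measurable_f.
  have b_fin : (\int[mu]_x (`|avg f n x|)%:E)%E \is a fin_num.
    by near: n; exact: cvg_is_fine avg_cvg0.
  rewrite -(fineK b_fin) -EFinM lee_fin div_sqrt_majorant_le// ltW//.
  by near: n; exact: (cvgr_lt 0 b_cvg0 1 ltr01).
- apply: (@cvg0_L1_le _ _ _ _ _ (fun n => Num.sqrt (majorant b n) * fine (mu setT))).
    rewrite -(mul0r (fine (mu setT))); apply: cvgMl.
    exact/sqrtr_cvg0/majorant_cvg0.
  apply: nearW => n.
  apply: (@le_trans _ _ (\int[mu]_x (cst (Num.sqrt (majorant b n))%:E x))%E).
    apply: ae_ge0_le_integral => //.
    + exact/measurable_EFinP/measurable_abs_indic_mul_f/measurableC.
    + by move=> x _; rewrite lee_fin sqrtr_ge0.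
    + apply: filterS _ ae_f_bounded => x fx _; have /andP[fx0 _] := fx n.
      rewrite /= lee_fin indicCE indic_peak_set ger0_norm.
        exact: ge_sqr_mul_le_sqrt (ltW (e0 n)).
      by rewrite mulr_ge0// subr_ge0; case: ltP.
  by rewrite integral_cst// EFinM fineK ?fin_num_measure.
Unshelve. all: by end_near. Qed.

Lemma L1_avg_le_split (A : nat -> set T) (M : R) n :
    (forall j, measurable (A j)) -> 0 <= M ->
  (\int[mu]_x (`|avg f n x|)%:E <=
    (mean (fun j => fine (\int[mu]_x (`|\1_(~` A j) x * f j x|)%:E)) n)%:E +
    M%:E * \int[mu]_x (`|avg (fun j => \1_(A j)) n x|)%:E +
    \int[mu]_x (Num.max (g x - M) 0)%:E)%E.
Proof.
move=> mA M0; set off := fun j x => `|\1_(~` A j) x * f j x|.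
set dens := fun x => `|avg (fun j => \1_(A j) : T -> R) n x|.
have moff j : measurable_fun setT (off j).
  exact/measurable_abs_indic_mul_f/measurableC.
have off_ge0 j x : 0 <= off j x by exact: normr_ge0.
have mdens : measurable_fun setT (fun x => (dens x)%:E).
  apply/measurable_EFinP/measurableT_comp => //.
  by apply: measurable_avg => j; exact: measurable_indic.
pose F1 x := (avg off n x)%:E; pose F2 x := (M%:E * (dens x)%:E)%E.
pose F3 x := (Num.max (g x - M) 0)%:E.
have F1_ge0 x : setT x -> (0 <= F1 x)%E by rewrite /F1 lee_fin avg_ge0.
have F2_ge0 x : setT x -> (0 <= F2 x)%E.
  by move=> _; rewrite /F2 /dens mule_ge0 ?lee_fin.
have F3_ge0 x : setT x -> (0 <= F3 x)%E by rewrite /F3 lee_fin le_max lexx orbT.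
have mF1 : measurable_fun setT F1 by exact/measurable_EFinP/measurable_avg.
have mF2 : measurable_fun setT F2 by exact: measurable_funeM.
have mF3 : measurable_fun setT F3.
  apply/measurable_EFinP/measurable_maxr => //; apply: measurable_funB => //.
  exact/measurable_EFinP/(measurable_int mu g_int).
have F12_ge0 x : setT x -> (0 <= F1 x + F2 x)%E.
  by move=> Tx; rewrite adde_ge0 ?F1_ge0 ?F2_ge0.
apply: (@le_trans _ _ (\int[mu]_x (F1 x + F2 x + F3 x))%E).
  apply: ae_ge0_le_integral => //.
  - apply/measurable_EFinP/measurableT_comp => //.
    by apply: measurable_avg; exact: measurable_f.
  - by move=> x Tx; rewrite adde_ge0 ?F12_ge0 ?F3_ge0.
  - exact/emeasurable_funD/mF3/emeasurable_funD.
  apply: filterS _ ae_f_bounded => x fx _.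
  rewrite /F1 /F2 /F3 /dens -EFinM -!EFinD lee_fin.
  rewrite !ger0_norm ?avg_ge0// => [|j]; last by case/andP: (fx j).
  apply: le_trans (mean_le_split n fx (fun j => indic_ge0_le1 (A j) x)
    (fun j => indicCE (A j) x) M0) _.
  rewrite lerD2r lerD2r; apply: (@ler_mean _ _ (off ^~ x)) => j _.
  exact: ler_norm.
rewrite (ge0_integralD _ measurableT F12_ge0 (emeasurable_funD mF1 mF2) F3_ge0 mF3).
rewrite (ge0_integralD _ measurableT F1_ge0 mF1 F2_ge0 mF2).
have dens_ge0 x : setT x -> (0 <= (dens x)%:E)%E by rewrite lee_fin /dens.
rewrite (ge0_integralZl_EFin _ measurableT dens_ge0 mdens M0).
rewrite ge0_integral_avg// => j.
exact/integral_abs_indic_mul_fin_num/measurableC.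
Qed.

Lemma L1_cvg0_of_split : cvg0_off_density0 (cvg0_L1 mu) -> cvg0_L1 mu (avg f).
Proof.
move=> [A [mA [A_cvg0 off_cvg0]]].
have L1_ge0 (h : nat -> T -> R) n : (0 <= \int[mu]_x (`|h n x|)%:E)%E.
  by apply: integral_ge0 => x _; rewrite lee_fin.
have mean_off_cvg0 : mean (fun j => fine (\int[mu]_x (`|\1_(~` A j) x * f j x|)%:E))
    @ \oo --> 0 by exact/mean_cvg0/fine_cvg.
apply/(ge0_cvge0P (L1_ge0 _)) => eps eps0.
have eps30 : 0 < eps / 3 by rewrite divr_gt0.
have [M tailM] : exists M : nat,
    (\int[mu]_x (Num.max (g x - M%:R) 0)%:E <= (eps / 3)%:E)%E.
  have tail_ge0 (M : nat) : (0 <= \int[mu]_x (Num.max (g x - M%:R) 0)%:E)%E.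
    by apply: integral_ge0 => x _; rewrite lee_fin le_max lexx orbT.
  near \oo => M; exists M; near: M.
  exact: (ge0_cvge0P tail_ge0).1 (cvg0_integral_max_subn g_int) _ eps30.
pose delta := eps / 3 / (M%:R + 1).
have delta0 : 0 < delta by rewrite divr_gt0// ltr_pwDr.
near=> n; apply: le_trans (L1_avg_le_split n mA (ler0n _ M)) _.
have -> : eps = eps / 3 + eps / 3 + eps / 3 by lra.
rewrite !EFinD leeD// leeD//.
  rewrite lee_fin ltW//; near: n; exact: cvgr_lt 0 mean_off_cvg0 _ eps30.
apply: (@le_trans _ _ (M%:R%:E * delta%:E)%E).
  rewrite lee_wpmul2l ?lee_fin//; near: n.
  exact: (ge0_cvge0P (L1_ge0 _)).1 A_cvg0 _ delta0.
rewrite -EFinM lee_fin /delta mulrCA ger_pMr//.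
by rewrite ler_pdivrMr ?mul1r ?lerDl// ltr_pwDr.
Unshelve. all: by end_near. Qed.

End cesaro_cvg0_off_density0.

Theorem corollary5p1 (d : measure_display) (T : measurableType d) (R : realType)
  (mu : {finite_measure set T -> \bar R}) (f : nat -> T -> R) (g : T -> R) :
  (forall n, mu.-integrable setT (fun x => (f n x)%:E)) ->
  (forall n, {ae mu, forall x, 0 <= f n x}) ->
  mu.-integrable setT (fun x => (g x)%:E) ->
  (forall n, {ae mu, forall x, f n x <= g x}) ->
  (cvg0_ae mu (avg f) <->
    exists A : nat -> set T, (forall n, measurable (A n)) /\
      cvg0_ae mu (avg (fun n => \1_(A n))) /\
      cvg0_ae mu (fun n x => \1_(~` A n) x * f n x))
  /\
  (cvg0_L1 mu (avg f) <->
    exists A : nat -> set T, (forall n, measurable (A n)) /\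
      cvg0_L1 mu (avg (fun n => \1_(A n))) /\
      cvg0_L1 mu (fun n x => \1_(~` A n) x * f n x)).
Proof.
move=> f_int f_ge0 g_int f_le_g; split; split.
- exact: (ae_split_of_cvg0 f_int f_ge0 f_le_g).
- exact: (ae_cvg0_of_split f_ge0 f_le_g).
- exact: (L1_split_of_cvg0 f_int f_ge0 f_le_g).
- exact: (L1_cvg0_of_split f_int f_ge0 g_int f_le_g).
Qed.
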